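(* Let $E\in\mathbb{R}^{n\times n}$. If there exists a diagonal positive definite matrix $P\in\mathbb{R}^{n\times n}$ such that $$E^\top P+PE-2P\prec 0,$$ then $E\in\mathbb{B}_\Theta$, i.e. $\operatorname{rank}(I_n-\Theta E)=n$ for every diagonal positive definite matrix $\Theta\in\mathbb{R}^{n\times n}$ with $\Theta\preceq I_n$.
   Context: For a square matrix $E\in\mathbb{R}^{n\times n}$, we write $E\in\mathbb{B}_\Theta$ if $\operatorname{rank}(I_n-\Theta E)=n$ for all diagonal positive definite $\Theta\in\mathbb{R}^{n\times n}$ satisfying $\Theta\preceq I_n$. The notation $\prec 0$, $\preceq$ refers to the Loewner order on symmetric matrices. *)

From HB Require Import structures.
From mathcomp Require Import all_boot all_order all_algebra.
Set Implicit Arguments. Unset Strict Implicit. Unset Printing Implicit Defensive.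
Import Order.TTheory GRing.Theory Num.Theory.
Local Open Scope ring_scope.

Definition symmetric_mx (R : pzRingType) (n : nat) (A : 'M[R]_n) : Prop := A^T = A.

Definition negdef_mx (R : realFieldType) (n : nat) (A : 'M[R]_n) : Prop :=
  symmetric_mx A /\ forall x : 'cV[R]_n, x != 0 -> (x^T *m A *m x) 0 0 < 0.

Definition possemidef_mx (R : realFieldType) (n : nat) (A : 'M[R]_n) : Prop :=
  symmetric_mx A /\ forall x : 'cV[R]_n, 0 <= (x^T *m A *m x) 0 0.

Definition loewner_le (R : realFieldType) (n : nat) (A B : 'M[R]_n) : Prop :=
  possemidef_mx (B - A).

(* Diagonal positive definite matrix: diagonal with positive diagonal entries
   (for diagonal matrices, positive definiteness is equivalent to this; we
   state it with the Loewner definition to stay close to the paper). *)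
Definition diag_posdef (R : realFieldType) (n : nat) (A : 'M[R]_n) : Prop :=
  is_diag_mx A /\ symmetric_mx A /\
  forall x : 'cV[R]_n, x != 0 -> 0 < (x^T *m A *m x) 0 0.

Definition in_B_Theta (R : realFieldType) (n : nat) (E : 'M[R]_n) : Prop :=
  forall Theta : 'M[R]_n, diag_posdef Theta -> loewner_le Theta 1%:M ->
    \rank (1%:M - Theta *m E) = n.

From HB Require Import structures.
From mathcomp Require Import all_boot all_order all_algebra.
From mathcomp Require Import ring.

Set Implicit Arguments.
Unset Strict Implicit.
Unset Printing Implicit Defensive.
Import Order.TTheory GRing.Theory Num.Theory.
Local Open Scope ring_scope.

(* If [1 - Theta E] were singular, some [x != 0] would satisfy [x = Theta y]
   with [y = E x].  For diagonal [P] and [Theta], with entries [p_i > 0] and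
   [0 < t_i <= 1], the quadratic form of [E^T P + P E - 2 P] at [x] then equals
   [2 * \sum_i p_i t_i (1 - t_i) y_i^2 >= 0], contradicting negative
   definiteness. *)

Lemma quad_form_delta (R : pzSemiRingType) n (A : 'M[R]_n) (i : 'I_n) :
  ((delta_mx i 0 : 'cV[R]_n)^T *m A *m (delta_mx i 0 : 'cV[R]_n)) 0 0 = A i i.
Proof. by rewrite trmx_delta -rowE -colE !mxE. Qed.

Lemma quad_form_diag_mx (R : comPzSemiRingType) n (d : 'rV[R]_n)
    (u w : 'cV[R]_n) :
  (u^T *m diag_mx d *m w) 0 0 = \sum_i u i 0 * d 0 i * w i 0.
Proof. by rewrite !mxE; apply: eq_bigr => i _; rewrite mul_mx_diag !mxE. Qed.

Lemma delta_cV_neq0 (R : nzSemiRingType) n (i : 'I_n) :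
  (delta_mx i 0 : 'cV[R]_n) != 0.
Proof.
by apply/eqP => /matrixP /(_ i 0); rewrite !mxE !eqxx => /eqP; rewrite oner_eq0.
Qed.

Lemma diag_posdefP (R : realFieldType) n (A : 'M[R]_n) :
  diag_posdef A -> exists2 d : 'rV_n, A = diag_mx d & forall i, 0 < d 0 i.
Proof.
case=> /diag_mxP [d ->] [_ posA]; exists d => // i.
by have := posA _ (delta_cV_neq0 R i); rewrite quad_form_delta mxE eqxx mulr1n.
Qed.

Lemma loewner_le_diag_mx1 (R : realFieldType) n (d : 'rV[R]_n) :
  loewner_le (diag_mx d) 1%:M -> forall i, d 0 i <= 1.
Proof.
case=> _ psd i; have := psd (delta_mx i 0).
by rewrite quad_form_delta !mxE eqxx subr_ge0.
Qed.

Lemma rank_neq_ker_cV (F : fieldType) n (A : 'M[F]_n) :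
  \rank A != n -> exists2 x : 'cV_n, x != 0 & A *m x = 0.
Proof.
move=> rankA; have /det0P [v v_neq0 vA0] : \det A^T == 0.
  by rewrite det_tr -[_ == 0]negbK -unitfE -unitmxE -row_free_unit.
exists v^T; first by rewrite -trmx0 (inj_eq trmx_inj).
by rewrite -[A]trmxK -trmx_mul vA0 trmx0.
Qed.

Lemma quad_form_Lyapunov_fixpoint (R : comPzRingType) n (E : 'M[R]_n)
    (p t : 'rV[R]_n) (x : 'cV[R]_n) :
  x = diag_mx t *m (E *m x) ->
  (x^T *m (E^T *m diag_mx p + diag_mx p *m E - 2%:R *: diag_mx p) *m x) 0 0
  = 2 * \sum_i p 0 i * t 0 i * (1 - t 0 i) * (E *m x) i 0 ^+ 2.
Proof.
set y := E *m x => xE.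
have x_i i : x i 0 = t 0 i * y i 0 by rewrite xE mul_diag_mx mxE.
have -> : (x^T *m (E^T *m diag_mx p + diag_mx p *m E - 2%:R *: diag_mx p) *m x) 0 0
    = (y^T *m diag_mx p *m x) 0 0 + (x^T *m diag_mx p *m y) 0 0
      - 2%:R * (x^T *m diag_mx p *m x) 0 0.
  rewrite mulmxBr mulmxDr mulmxBl mulmxDl -scalemxAr -scalemxAl.
  by rewrite trmx_mul !mulmxA !mxE.
rewrite !quad_form_diag_mx -big_split !mulr_sumr -sumrB.
by apply: eq_bigr => i _; rewrite /= x_i; ring.
Qed.

Theorem lemma1 (R : realFieldType) (n : nat) (E : 'M[R]_n) :
  (exists P : 'M[R]_n, diag_posdef P /\
     negdef_mx (E^T *m P + P *m E - 2%:R *: P)) ->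
  in_B_Theta E.
Proof.
case=> P [/diag_posdefP [p -> p_gt0] [_ negdef]] Theta.
move=> /diag_posdefP [t -> t_gt0] /loewner_le_diag_mx1 t_le1.
apply/eqP; apply: contraT => /rank_neq_ker_cV [x x_neq0].
rewrite mulmxBl mul1mx -mulmxA => /eqP; rewrite subr_eq0 => /eqP fixx.
have := negdef x x_neq0; rewrite (quad_form_Lyapunov_fixpoint p fixx).
apply: contraLR => _; rewrite -leNgt mulr_ge0 // sumr_ge0 // => i _.
by rewrite mulr_ge0 ?sqr_ge0 // mulr_ge0 ?subr_ge0 // mulr_ge0 // ltW.
Qed.
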